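(* In the setting described in the context, there is a bound $\theta_{\max}$ which is $O(N^2)$ as a function of the number of channels $N$ such that, at every step $l$ of the projected subgradient updating performed within the DCDM algorithm, $\|\theta(\lambda^{(l)})\|_2\le\theta_{\max}$.
   Context: Setting: a source communicates with $K$ users through a single relay over $N$ channels. Given data: user weights $w_1,\dots,w_K\ge0$ with $\sum_kw_k=1$; nonnegative channel power gains $a_m$, $b_{nk}$, $c_{mk}$ ($1\le m,n\le N$, $1\le k\le K$); power limits $P_s,P_r,P_t>0$. Logarithms are base 2; $R_{mnk}(p^s,p^r)=\tfrac12\min\{\log(1+a_mp^s),\log(1+c_{mk}p^s+b_{nk}p^r)\}$. For $\lambda=(\lambda_s,\lambda_r,\lambda_t)\succeq0$ the dual function of the relaxed problem is $g(\lambda)=\max[\sum_{m,n,k}\frac{w_k}{2}\tilde\phi_{mnk}\min\{\log(1+a_mP^s_{mnk}/\tilde\phi_{mnk}),\log(1+c_{mk}P^s_{mnk}/\tilde\phi_{mnk}+b_{nk}P^r_{mnk}/\tilde\phi_{mnk})\}-(\lambda_s+\lambda_t)\sum P^s_{mnk}-(\lambda_r+\lambda_t)\sum P^r_{mnk}]+\lambda_sP_s+\lambda_rP_r+\lambda_tP_t$, the max over $\tilde\phi_{mnk}\in[0,1]$ with $\sum_{n,k}\tilde\phi_{mnk}=1\ \forall m$, $\sum_{m,k}\tilde\phi_{mnk}=1\ \forall n$ and $P^s,P^r\ge0$. Per-$\lambda$ procedure: $\alpha=2\ln2$, $[x]^+=\max\{x,0\}$, $p_2=([\frac{w_k}{\alpha(\lambda_s+\lambda_t)}-\frac1{c_{mk}}]^+,0)$,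 (for $b_{nk}>0$) $p_1=(1,\frac{a_m-c_{mk}}{b_{nk}})[\frac{w_kb_{nk}}{\alpha(b_{nk}(\lambda_s+\lambda_t)+(a_m-c_{mk})(\lambda_r+\lambda_t))}-\frac1{a_m}]^+$; $L_{mnk}(p^s,p^r,\lambda)=w_kR_{mnk}(p^s,p^r)-(\lambda_s+\lambda_t)p^s-(\lambda_r+\lambda_t)p^r$; $(p^s_{mnk}(\lambda),p^r_{mnk}(\lambda))$ equals $([\frac{w_k}{\alpha(\lambda_s+\lambda_t)}-\frac1{a_m}]^+,0)$ if $a_m\le c_{mk}$, $p_1$ if $a_m>c_{mk}$ and $\frac{c_{mk}}{\lambda_s+\lambda_t}<\frac{b_{nk}}{\lambda_r+\lambda_t}$, otherwise whichever of $p_1,p_2$ gives larger $L_{mnk}$. $A_{mnk}(\lambda)=L_{mnk}(p^s_{mnk}(\lambda),p^r_{mnk}(\lambda),\lambda)$; $k^*(m,n)\in\arg\max_kA_{mnk}(\lambda)$; $X^*$ an $N\times N$ permutation matrix maximizing $\sum x_{mn}A_{mnk^*(m,n)}(\lambda)$; $\phi^*_{mnk}(\lambda)=x^*_{mn}\mathbf 1[k=k^*(m,n)]$, $P^{s*}_{mnk}(\lambda)=\phi^*_{mnk}(\lambda)p^s_{mnk}(\lambda)$, $P^{r*}_{mnk}(\lambda)=\phi^*_{mnk}(\lambda)p^r_{mnk}(\lambda)$. Subgradient: $\theta(\lambda)=(P_s,P_r,P_t)-\sum_{m,n,k}(P^{s*}_{mnk}(\lambda),P^{r*}_{mnk}(\lambda),P^{s*}_{mnk}(\lambda)+P^{r*}_{mnk}(\lambda))$.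 Regions: $\mathcal R_1=\{\lambda\succeq0:\lambda_s+\lambda_t\ge\frac{\min_{\{k:w_k>0\}}w_k\min\{\min_{\{m:a_m>0\}}a_m,\min_{\{m,k:c_{mk}>0\}}c_{mk}\}}{4\alpha(\max_ma_m\min\{P_s,P_t\}+1)}\}$, $\mathcal R_2=\{\lambda\succeq0:\lambda_s+\lambda_t+\frac{\min_{\{m:a_m>0\}}a_m}{\max_{n,k}b_{nk}}(\lambda_r+\lambda_t)\ge\frac{\min_{\{k:w_k>0\}}w_k}{\alpha(\min\{P_s,P_t\}+1/\min_{\{m:a_m>0\}}a_m)}\}$. Projected subgradient updating onto a convex region $\mathcal R$: start from $\lambda^{(0)}\in\mathcal R$ and iterate $\lambda^{(l+1)}=\Pi_{\mathcal R}(\lambda^{(l)}-\nu^{(l)}\theta(\lambda^{(l)}))$, $\Pi_{\mathcal R}$ the Euclidean projection, $\nu^{(l)}>0$. DCDM algorithm: if some $c_{mk}>0$: run projected subgradient updating onto $\mathcal R_1$ (output $\lambda_1^*$); then set all $c_{mk}=0$ and run projected subgradient updating onto $\mathcal R_2$ with these modified gains (output $\lambda_2^*$); return $\arg\min_{\lambda\in\{\lambda_1^*,\lambda_2^*\}}g(\lambda)$. Otherwise, run projected subgradient updating onto $\mathcal R_2$ and return its output. *)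

From HB Require Import structures.
From mathcomp Require Import all_boot all_order all_algebra all_fingroup.
From mathcomp Require Import all_classical all_reals all_analysis.
Set Implicit Arguments. Unset Strict Implicit. Unset Printing Implicit Defensive.
Import Order.TTheory GRing.Theory Num.Theory.
Local Open Scope ring_scope.

Section Relay.
Variable R : realType.

(* triples (lambda_s, lambda_r, lambda_t) and subgradients (s, r, t) *)
Record triple := Triple { ts : R; tr : R; tt : R }.

Definition tsub (x y : triple) : triple :=
  Triple (ts x - ts y) (tr x - tr y) (tt x - tt y).
Definition tscale (nu : R) (x : triple) : triple :=
  Triple (nu * ts x) (nu * tr x) (nu * tt x).
Definition dist2 (x y : triple) : R :=
  (ts x - ts y) ^+ 2 + (tr x - tr y) ^+ 2 + (tt x - tt y) ^+ 2.
Definition norm3 (x : triple) : R :=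
  Num.sqrt (ts x ^+ 2 + tr x ^+ 2 + tt x ^+ 2).
Definition tnonneg (x : triple) : Prop := 0 <= ts x /\ 0 <= tr x /\ 0 <= tt x.

Definition alpha : R := 2 * ln 2.
Definition log2 (x : R) : R := ln x / ln 2.
Definition posp (x : R) : R := Num.max x 0.

(* minimum of the positive values of f (meaningful when some value is > 0):
   the default element is >= every value, so it never changes the result *)
Definition maxof (T : finType) (f : T -> R) : R := \big[Num.max/0]_(i : T) f i.
Definition minpos (T : finType) (f : T -> R) : R :=
  \big[Num.min/maxof f]_(i : T | 0 < f i) f i.

Definition rate (am cmk bnk ps pr : R) : R :=
  2^-1 * Num.min (log2 (1 + am * ps)) (log2 (1 + cmk * ps + bnk * pr)).

(* L_{mnk}; ls = lambda_s + lambda_t, lr = lambda_r + lambda_t *)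
Definition Lag (wk am cmk bnk ls lr : R) (p : R * R) : R :=
  wk * rate am cmk bnk p.1 p.2 - ls * p.1 - lr * p.2.

(* [x - 1/g]^+ with the convention 1/0 = +infinity (value 0 when g = 0) *)
Definition wfill (x g : R) : R := if 0 < g then posp (x - g^-1) else 0.

Definition pw2 (wk cmk ls : R) : R * R := (wfill (wk / (alpha * ls)) cmk, 0).
Definition pw1 (wk am cmk bnk ls lr : R) : R * R :=
  let s := posp (wk * bnk / (alpha * (bnk * ls + (am - cmk) * lr)) - am^-1) in
  (s, (am - cmk) / bnk * s).

(* (p^s_{mnk}(lambda), p^r_{mnk}(lambda)) : the per-lambda procedure, as a
   relation (ties in "whichever gives larger L" may be broken either way).
   The test c/(ls) < b/(lr) is written as c*lr < b*ls (ls, lr >= 0). *)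
Definition pchoice (wk am cmk bnk ls lr : R) (p : R * R) : Prop :=
  if am <= cmk then p = (wfill (wk / (alpha * ls)) am, 0)
  else if cmk * lr < bnk * ls then p = pw1 wk am cmk bnk ls lr
  else if bnk == 0 then p = pw2 wk cmk ls
  else (p = pw1 wk am cmk bnk ls lr /\
          Lag wk am cmk bnk ls lr (pw2 wk cmk ls)
            <= Lag wk am cmk bnk ls lr (pw1 wk am cmk bnk ls lr))
    \/ (p = pw2 wk cmk ls /\
          Lag wk am cmk bnk ls lr (pw1 wk am cmk bnk ls lr)
            <= Lag wk am cmk bnk ls lr (pw2 wk cmk ls)).

(* The permutation matrix X* is
   x_{mn} = [sigma m = n] for a permutation sigma. *)
Definition subgrad (N K : nat) (w : 'I_K -> R) (a : 'I_N -> R)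
    (b c : 'I_N -> 'I_K -> R) (Ps Pr Pt : R) (lam theta : triple) : Prop :=
  let ls := ts lam + tt lam in
  let lr := tr lam + tt lam in
  exists (p : 'I_N -> 'I_N -> 'I_K -> R * R) (kstar : 'I_N -> 'I_N -> 'I_K)
         (sigma : 'S_N),
    let A m n k := Lag (w k) (a m) (c m k) (b n k) ls lr (p m n k) in
    let x (s : 'S_N) (m n : 'I_N) : R := ((s m == n) : bool)%:R in
    let phi m n k : R := x sigma m n * ((k == kstar m n) : bool)%:R in
    (forall m n k, pchoice (w k) (a m) (c m k) (b n k) ls lr (p m n k)) /\
    (forall m n k, A m n k <= A m n (kstar m n)) /\
    (forall s : 'S_N, \sum_m \sum_n x s m n * A m n (kstar m n)
                      <= \sum_m \sum_n x sigma m n * A m n (kstar m n)) /\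
    theta = Triple
      (Ps - \sum_m \sum_n \sum_k phi m n k * (p m n k).1)
      (Pr - \sum_m \sum_n \sum_k phi m n k * (p m n k).2)
      (Pt - \sum_m \sum_n \sum_k phi m n k * ((p m n k).1 + (p m n k).2)).

Definition region1 (N K : nat) (w : 'I_K -> R) (a : 'I_N -> R)
    (c : 'I_N -> 'I_K -> R) (Ps Pt : R) (lam : triple) : Prop :=
  tnonneg lam /\
  minpos w * Num.min (minpos a) (minpos (fun mk : 'I_N * 'I_K => c mk.1 mk.2))
    / (4 * alpha * (maxof a * Num.min Ps Pt + 1)) <= ts lam + tt lam.

Definition region2 (N K : nat) (w : 'I_K -> R) (a : 'I_N -> R)
    (b : 'I_N -> 'I_K -> R) (Ps Pt : R) (lam : triple) : Prop :=
  tnonneg lam /\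
  minpos w / (alpha * (Num.min Ps Pt + (minpos a)^-1))
    <= ts lam + tt lam
       + minpos a / maxof (fun nk : 'I_N * 'I_K => b nk.1 nk.2) * (tr lam + tt lam).

Definition is_proj (Rg : triple -> Prop) (x y : triple) : Prop :=
  Rg y /\ forall z, Rg z -> dist2 x y <= dist2 x z.

Definition psg_run (Rg : triple -> Prop) (sg : triple -> triple -> Prop)
    (lam th : nat -> triple) : Prop :=
  Rg (lam 0%N) /\
  forall l : nat, sg (lam l) (th l) /\
    exists nu : R, 0 < nu /\ is_proj Rg (tsub (lam l) (tscale nu (th l))) (lam l.+1).

Definition gain_ok (glo ghi g : R) : Prop := g = 0 \/ (glo <= g /\ g <= ghi).

End Relay.

From HB Require Import structures.
From mathcomp Require Import all_boot all_order all_algebra all_fingroup.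
From mathcomp Require Import all_classical all_reals all_analysis.
From mathcomp Require Import ring lra.
Import Order.TTheory GRing.Theory Num.Theory.
Local Open Scope ring_scope.

(* On either projection region the dual prices are bounded below by a
   constant independent of N: on R_1 the source price lambda_s + lambda_t, on
   R_2 (where all c_mk = 0) the sum of the source and relay prices.  The
   water-filling formulas then bound every per-channel power by a constant
   depending only on this floor and on the gain range [glo, ghi], and
   theta(lambda) is (P_s, P_r, P_t) minus sums of at most N^2 K such powers. *)

Section Bounds.
Context {R : realType}.

Lemma ler_wpdiv (x' x y y' : R) :
  0 <= x' -> x' <= x -> 0 < y -> y <= y' -> x' / y' <= x / y.
Proof.
move=> x'0 x'x y0 yy'; have y'0 : 0 < y' by apply: lt_le_trans yy'.
apply: (@le_trans _ _ (x' / y)); first by rewrite ler_wpM2l // lef_pV2 ?posrE.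
by rewrite ler_wpM2r // invr_ge0 ltW.
Qed.

Lemma norm3_le_abs (x y z : R) : norm3 (Triple x y z) <= `|x| + `|y| + `|z|.
Proof.
have s0 : 0 <= `|x| + `|y| + `|z| by rewrite !addr_ge0.
rewrite /norm3 /= -(ger0_norm s0) -sqrtr_sqr ler_sqrt ?sqr_ge0 //.
rewrite -[x ^+ 2]real_normK ?num_real // -[y ^+ 2]real_normK ?num_real //.
rewrite -[z ^+ 2]real_normK ?num_real //.
move: (normr_ge0 x) (normr_ge0 y) (normr_ge0 z).
move: `|x| `|y| `|z| => X Y Z X0 Y0 Z0.
have -> : (X + Y + Z) ^+ 2 = X ^+ 2 + Y ^+ 2 + Z ^+ 2 + 2 * (X * Y + X * Z + Y * Z).
  by ring.
by rewrite lerDl mulr_ge0 // !addr_ge0 // mulr_ge0.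
Qed.

Lemma sum3_le (N K : nat) (F : 'I_N -> 'I_N -> 'I_K -> R) (M : R) :
  (forall m n k, 0 <= F m n k <= M) ->
  0 <= \sum_m \sum_n \sum_k F m n k <= N%:R ^+ 2 * K%:R * M.
Proof.
move=> FM; apply/andP; split.
  apply: sumr_ge0 => m _; apply: sumr_ge0 => n _; apply: sumr_ge0 => k _.
  by case/andP: (FM m n k).
apply: (@le_trans _ _ (\sum_(m < N) \sum_(n < N) \sum_(k < K) M)).
  apply: ler_sum => m _; apply: ler_sum => n _; apply: ler_sum => k _.
  by case/andP: (FM m n k).
rewrite !sumr_const !card_ord -!mulrnA -(mulr_natr M) !natrM.
by rewrite le_eqVlt; apply/orP; left; apply/eqP; ring.
Qed.

Lemma alpha_gt0 : 0 < alpha R.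
Proof. by rewrite /alpha mulr_gt0 // ln_gt0 // ltr1n. Qed.

Lemma gain_ok_ge0 {glo ghi g : R} :
  0 < glo -> glo <= ghi -> gain_ok glo ghi g -> 0 <= g <= ghi.
Proof. by move=> glo0 gloghi [->|[gg ggh]]; apply/andP; split; lra. Qed.

Lemma gain_ok_gt0 {glo ghi g : R} : gain_ok glo ghi g -> 0 < g -> glo <= g <= ghi.
Proof. by case=> [->|[-> ->]] //; rewrite ltxx. Qed.

Lemma gains_minpos_maxof {T : finType} {f : T -> R} {glo ghi : R} :
  0 < glo -> glo <= ghi -> (forall i, gain_ok glo ghi (f i)) ->
  (exists i, 0 < f i) -> glo <= minpos f <= ghi /\ glo <= maxof f <= ghi.
Proof.
move=> glo0 gloghi fok [i fi0].
have /andP[glofi fighi] := gain_ok_gt0 (fok i) fi0.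
have maxf : glo <= maxof f <= ghi.
  rewrite (le_trans glofi (le_bigmax _ _ i)); apply/bigmax_leP; split=> [|j _]; first lra.
  by case/andP: (gain_ok_ge0 glo0 gloghi (fok j)).
split=> //; rewrite /minpos (bigmin_inf i) // andbT; apply/bigmin_geP; split=> [|j fj0].
  by case/andP: maxf.
by case/andP: (gain_ok_gt0 (fok j) fj0).
Qed.

Lemma wfill_le (x g : R) : 0 <= x -> 0 <= wfill x g <= x.
Proof.
move=> x0; rewrite /wfill; case: ifP => [g0|_]; last by rewrite lexx x0.
rewrite /posp le_max lexx orbT ge_max x0 andbT /= gerDl oppr_le0 invr_ge0.
exact: ltW.
Qed.

(* [ls] and [lr] stand for lambda_s + lambda_t and lambda_r + lambda_t; a
   vanishing direct gain [g] lets the relay price [lr] take over. *)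
Definition price_floor (dl g ls lr : R) : Prop :=
  dl <= ls \/ (g = 0 /\ dl <= ls + lr).

Lemma wfill_water_le {dl wk ls g : R} :
  0 < dl -> 0 <= wk <= 1 -> 0 <= ls -> g = 0 \/ dl <= ls ->
  0 <= wfill (wk / (alpha R * ls)) g <= (alpha R * dl)^-1.
Proof.
move=> dl0 /andP[wk0 wk1] ls0 [->|dlls].
  by rewrite /wfill ltxx lexx invr_ge0 ltW // mulr_gt0 // alpha_gt0.
have ha := alpha_gt0.
have /andP[-> le_wk] := wfill_le _ g (divr_ge0 wk0 (mulr_ge0 (ltW ha) ls0)).
apply: le_trans le_wk _; rewrite -[(_ * dl)^-1]mul1r.
apply: ler_wpdiv => //; first by rewrite mulr_gt0.
by rewrite ler_pM2l.
Qed.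

Definition relay_power_bound (glo ghi dl : R) : R := ghi / (alpha R * (glo * dl)).

Lemma relay_power_bound_ge0 {glo ghi dl : R} :
  0 < glo -> glo <= ghi -> 0 < dl -> 0 <= relay_power_bound glo ghi dl.
Proof.
move=> glo0 gloghi dl0; apply: divr_ge0; first lra.
exact: ltW (mulr_gt0 alpha_gt0 (mulr_gt0 glo0 dl0)).
Qed.

Lemma pw1_le {glo ghi dl wk am cmk bnk ls lr : R} :
  0 < glo -> glo <= ghi -> 0 < dl -> 0 <= wk <= 1 ->
  gain_ok glo ghi am -> gain_ok glo ghi bnk -> gain_ok glo ghi cmk ->
  cmk < am -> 0 < bnk -> 0 <= ls -> 0 <= lr -> price_floor dl cmk ls lr ->
  0 <= (pw1 wk am cmk bnk ls lr).1 <= relay_power_bound glo ghi dl /\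
  0 <= (pw1 wk am cmk bnk ls lr).2 <= ghi / glo * relay_power_bound glo ghi dl.
Proof.
move=> glo0 gloghi dl0 /andP[wk0 wk1] aok bok cok cmk_am bnk0 ls0 lr0 floor.
have ha := alpha_gt0.
have /andP[cmk0 _] := gain_ok_ge0 glo0 gloghi cok.
have /andP[glo_am am_ghi] := gain_ok_gt0 aok (le_lt_trans cmk0 cmk_am).
have /andP[glo_bnk bnk_ghi] := gain_ok_gt0 bok bnk0.
have denom : glo * dl <= bnk * ls + (am - cmk) * lr.
  case: floor => [dlls|[cmk_eq0 dlsum]].
    have : 0 <= (am - cmk) * lr by rewrite mulr_ge0 // subr_ge0 ltW.
    have : glo * dl <= bnk * ls by rewrite ler_pM // ltW.
    lra.
  rewrite cmk_eq0 subr0.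
  have : glo * ls <= bnk * ls by rewrite ler_wpM2r.
  have : glo * lr <= am * lr by rewrite ler_wpM2r.
  have : glo * dl <= glo * (ls + lr) by rewrite ler_wpM2l // ltW.
  lra.
have den0 : 0 < alpha R * (glo * dl) := mulr_gt0 ha (mulr_gt0 glo0 dl0).
have S0 := relay_power_bound_ge0 glo0 gloghi dl0.
have s_le : 0 <= (pw1 wk am cmk bnk ls lr).1 <= relay_power_bound glo ghi dl.
  rewrite /= /posp le_max lexx orbT ge_max S0 andbT /=.
  apply: le_trans (_ : wk * bnk / (alpha R * (bnk * ls + (am - cmk) * lr)) <= _).
    by rewrite gerDl oppr_le0 invr_ge0 (le_trans (ltW glo0) glo_am).
  apply: ler_wpdiv => //.
  - exact: mulr_ge0 wk0 (ltW bnk0).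
  - by rewrite -[ghi]mul1r (ler_pM wk0 (ltW bnk0) wk1 bnk_ghi).
  - by rewrite ler_pM2l.
split => //; move: s_le => /andP[s0 s_le].
have q0 : 0 <= (am - cmk) / bnk by apply: divr_ge0; lra.
have q_le : (am - cmk) / bnk <= ghi / glo by apply: ler_wpdiv; lra.
by rewrite /= -/(pw1 wk am cmk bnk ls lr) mulr_ge0 //= ler_pM.
Qed.

Definition power_bound (glo ghi dl : R) : R :=
  (alpha R * dl)^-1 + relay_power_bound glo ghi dl
  + ghi / glo * relay_power_bound glo ghi dl.

Lemma pchoice_le {glo ghi dl wk am cmk bnk ls lr : R} {p : R * R} :
  0 < glo -> glo <= ghi -> 0 < dl -> 0 <= wk <= 1 ->
  gain_ok glo ghi am -> gain_ok glo ghi bnk -> gain_ok glo ghi cmk ->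
  0 <= ls -> 0 <= lr -> price_floor dl cmk ls lr ->
  pchoice wk am cmk bnk ls lr p ->
  0 <= p.1 <= power_bound glo ghi dl /\ 0 <= p.2 <= power_bound glo ghi dl.
Proof.
move=> glo0 gloghi dl0 wk01 aok bok cok ls0 lr0 floor.
have W0 : 0 <= (alpha R * dl)^-1 by rewrite invr_ge0 ltW // mulr_gt0 // alpha_gt0.
have S0 := relay_power_bound_ge0 glo0 gloghi dl0.
have T0 : 0 <= ghi / glo * relay_power_bound glo ghi dl.
  by rewrite mulr_ge0 // divr_ge0 // ltW // (lt_le_trans glo0).
have M0 : 0 <= power_bound glo ghi dl by rewrite /power_bound; lra.
have /andP[am0 _] := gain_ok_ge0 glo0 gloghi aok.
have /andP[bnk0 _] := gain_ok_ge0 glo0 gloghi bok.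
have /andP[cmk0 _] := gain_ok_ge0 glo0 gloghi cok.
have direct_le g : g = 0 \/ dl <= ls ->
    0 <= wfill (wk / (alpha R * ls)) g <= power_bound glo ghi dl.
  move=> /(wfill_water_le dl0 wk01 ls0) /andP[-> le_W].
  by rewrite /power_bound; lra.
have direct_pair_le : 0 <= (pw2 wk cmk ls).1 <= power_bound glo ghi dl /\
              0 <= (pw2 wk cmk ls).2 <= power_bound glo ghi dl.
  rewrite /= lexx M0; split=> //; apply: direct_le.
  by case: floor => [|[]]; [right | left].
have relay_le : cmk < am -> 0 < bnk ->
    0 <= (pw1 wk am cmk bnk ls lr).1 <= power_bound glo ghi dl /\
    0 <= (pw1 wk am cmk bnk ls lr).2 <= power_bound glo ghi dl.
  move=> cmk_am bnk_gt0.
  have [/andP[s0 s_le] /andP[r0 r_le]] :=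
    pw1_le glo0 gloghi dl0 wk01 aok bok cok cmk_am bnk_gt0 ls0 lr0 floor.
  by rewrite /power_bound s0 r0; split; lra.
rewrite /pchoice; case: ifP => [am_cmk ->|/negbT]; last rewrite -ltNge => cmk_am.
  rewrite /= lexx M0; split=> //; apply: direct_le.
  case: floor => [|[cmk_eq0 _]]; [by right | left].
  by apply/eqP; rewrite eq_le am0 -cmk_eq0 am_cmk.
case: ifP => [direct_lt ->|_].
  apply: relay_le => //; rewrite lt_def bnk0 andbT; apply/eqP => bnk_eq0.
  by move: direct_lt; rewrite bnk_eq0 mul0r ltNge mulr_ge0.
case: eqP => [_ -> //|/eqP bnk_neq0].
have bnk_gt0 : 0 < bnk by rewrite lt_def bnk_neq0.
by case=> -[-> _]; [exact: relay_le | exact: direct_pair_le].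
Qed.

Lemma indicator_mul_le (b1 b2 : bool) (v B : R) :
  0 <= v <= B -> 0 <= b1%:R * b2%:R * v <= B.
Proof.
move=> /andP[v0 vB]; have B0 := le_trans v0 vB.
by case: b1; case: b2; rewrite //= ?(mulr0n, mulr1n, mul0r, mul1r, lexx, v0, vB).
Qed.

Lemma norm3_sub_le (Ps Pr Pt S1 S2 S3 T nn : R) :
  0 < Ps -> 0 < Pr -> 0 < Pt -> 1 <= nn ->
  0 <= S1 <= T -> 0 <= S2 <= T -> 0 <= S3 <= 2 * T ->
  norm3 (Triple (Ps - S1) (Pr - S2) (Pt - S3)) <= (Ps + Pr + Pt) * nn + 4 * T.
Proof.
move=> Ps0 Pr0 Pt0 nn1 /andP[S10 S1T] /andP[S20 S2T] /andP[S30 S3T].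
have normB_le (P S : R) : 0 <= P -> 0 <= S -> `|P - S| <= P + S.
  by move=> P0 S0; rewrite -{2}(ger0_norm P0) -{2}(ger0_norm S0) ler_normB.
apply: le_trans (norm3_le_abs _ _ _) _.
have := normB_le _ _ (ltW Ps0) S10; have := normB_le _ _ (ltW Pr0) S20.
have := normB_le _ _ (ltW Pt0) S30.
have : Ps + Pr + Pt <= (Ps + Pr + Pt) * nn by rewrite ler_peMr // ltW // !addr_gt0.
lra.
Qed.

Lemma subgrad_norm_le (N K : nat) (w : 'I_K -> R) (a : 'I_N -> R)
    (b c : 'I_N -> 'I_K -> R) (Ps Pr Pt glo ghi dl : R) (lam th : triple R) :
  0 < glo -> glo <= ghi -> 0 < dl -> (forall k, 0 <= w k <= 1) ->
  (forall m, gain_ok glo ghi (a m)) -> (forall n k, gain_ok glo ghi (b n k)) ->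
  (forall m k, gain_ok glo ghi (c m k)) ->
  (0 < N)%N -> 0 < Ps -> 0 < Pr -> 0 < Pt -> tnonneg lam ->
  (forall m k, price_floor dl (c m k) (ts lam + tt lam) (tr lam + tt lam)) ->
  subgrad w a b c Ps Pr Pt lam th ->
  norm3 th <= (Ps + Pr + Pt + 4 * K%:R * power_bound glo ghi dl) * N%:R ^+ 2.
Proof.
move=> glo0 gloghi dl0 w01 aok bok cok N0 Ps0 Pr0 Pt0 [s0 [r0 t0]] floor.
case=> p [kstar [sigma [pchosen [_ [_ ->]]]]].
set M := power_bound glo ghi dl.
have p_le m n k : 0 <= (p m n k).1 <= M /\ 0 <= (p m n k).2 <= M.
  by apply: pchoice_le (pchosen m n k); rewrite ?addr_ge0.
have nn1 : 1 <= N%:R ^+ 2 :> R by rewrite -natrX ler1n expn_gt0 N0.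
have -> : (Ps + Pr + Pt + 4 * K%:R * M) * N%:R ^+ 2
          = (Ps + Pr + Pt) * N%:R ^+ 2 + 4 * (N%:R ^+ 2 * K%:R * M) by ring.
apply: norm3_sub_le => //; try apply: sum3_le => m n k.
- by apply: indicator_mul_le; case: (p_le m n k).
- by apply: indicator_mul_le; case: (p_le m n k).
- have -> : 2 * (N%:R ^+ 2 * K%:R * M) = N%:R ^+ 2 * K%:R * (2 * M) by ring.
  apply: sum3_le => m n k.
  apply: indicator_mul_le; case: (p_le m n k) => /andP[? ?] /andP[? ?].
  by apply/andP; split; lra.
Qed.

Lemma psg_run_iterates {Rg : triple R -> Prop} {sg : triple R -> triple R -> Prop}
    {lam th : nat -> triple R} :
  psg_run Rg sg lam th -> forall l, Rg (lam l) /\ sg (lam l) (th l).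
Proof.
case=> Rg0 step l; split; last by case: (step l).
by case: l => [//|l]; have [_ [nu [_ []]]] := step l.
Qed.

Lemma weights_le1 {T : finType} {w : T -> R} :
  (forall i, 0 <= w i) -> \sum_i w i = 1 -> forall i, 0 <= w i <= 1.
Proof. by move=> w0 w1 i; rewrite w0 -w1 (bigD1 i) //= lerDl sumr_ge0. Qed.

Lemma minpos_weights_gt0 {T : finType} {w : T -> R} :
  (forall i, 0 <= w i) -> \sum_i w i = 1 -> 0 < minpos w.
Proof.
move=> w0 w1; case/boolP: [exists i, 0 < w i] => [/existsP[i wi0]|].
  by apply/bigmin_gtP; split=> //; apply: lt_le_trans wi0 (le_bigmax _ _ i).
rewrite negb_exists => /forallP none.
suff : \sum_i w i <= 0 by rewrite w1 ler10.
by apply: sumr_le0 => i _; rewrite leNgt none.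
Qed.

Definition region1_floor (wmin P glo ghi : R) : R :=
  wmin * glo / (4 * alpha R * (ghi * P + 1)).

Definition region2_floor (wmin P glo ghi : R) : R :=
  wmin / (alpha R * (P + glo^-1)) / (1 + ghi / glo).

Lemma region1_price_floor {N K : nat} {w : 'I_K -> R} {a : 'I_N -> R}
    {c : 'I_N -> 'I_K -> R} {Ps Pt glo ghi : R} {lam : triple R} :
  0 < glo -> 0 < Ps -> 0 < Pt -> 0 < minpos w ->
  glo <= minpos a -> glo <= minpos (fun mk : 'I_N * 'I_K => c mk.1 mk.2) ->
  maxof a <= ghi -> region1 w a c Ps Pt lam ->
  region1_floor (minpos w) (Num.min Ps Pt) glo ghi <= ts lam + tt lam.
Proof.
move=> glo0 Ps0 Pt0 w0 glo_a glo_c a_ghi [_]; apply: le_trans.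
have P0 : 0 <= Num.min Ps Pt by rewrite le_min !ltW.
have aP0 : 0 <= maxof a * Num.min Ps Pt by rewrite mulr_ge0 ?bigmax_ge_id.
have c4a : 0 < 4 * alpha R by rewrite mulr_gt0 ?alpha_gt0.
apply: ler_wpdiv.
- by rewrite mulr_ge0 ?ltW.
- by apply: ler_wpM2l; [exact: ltW | rewrite le_min glo_a glo_c].
- by rewrite mulr_gt0 // ltr_wpDl ?ltr01.
- by apply: ler_wpM2l; [exact: ltW | rewrite lerD2r ler_wpM2r].
Qed.

Lemma region2_price_floor {N K : nat} {w : 'I_K -> R} {a : 'I_N -> R}
    {b : 'I_N -> 'I_K -> R} {Ps Pt glo ghi : R} {lam : triple R} :
  0 < glo -> 0 < Ps -> 0 < Pt -> 0 < minpos w ->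
  glo <= minpos a -> minpos a <= ghi ->
  glo <= maxof (fun nk : 'I_N * 'I_K => b nk.1 nk.2) ->
  region2 w a b Ps Pt lam ->
  region2_floor (minpos w) (Num.min Ps Pt) glo ghi
    <= ts lam + tt lam + (tr lam + tt lam).
Proof.
move=> glo0 Ps0 Pt0 w0 glo_a a_ghi glo_b [[s0 [r0 t0]]].
set q := _ / maxof _; set ls := ts lam + tt lam; set lr := tr lam + tt lam => le_sum.
have ls0 : 0 <= ls by rewrite addr_ge0.
have lr0 : 0 <= lr by rewrite addr_ge0.
have P0 : 0 < Num.min Ps Pt by rewrite lt_min Ps0 Pt0.
have a0 : 0 < minpos a := lt_le_trans glo0 glo_a.
have gg0 : 0 <= ghi / glo by rewrite divr_ge0 // ltW // (lt_le_trans a0).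
have q_le : q <= ghi / glo by apply: ler_wpdiv; lra.
have floor_le : minpos w / (alpha R * (Num.min Ps Pt + glo^-1)) <= ls + q * lr.
  apply: le_trans le_sum; apply: ler_wpdiv => //.
  - exact: ltW.
  - by rewrite mulr_gt0 ?alpha_gt0 // addr_gt0 // invr_gt0.
  - by rewrite ler_pM2l ?alpha_gt0 // lerD2l lef_pV2 ?posrE.
have qlr_le : q * lr <= ghi / glo * lr := ler_wpM2r lr0 q_le.
have ghils0 : 0 <= ghi / glo * ls := mulr_ge0 gg0 ls0.
rewrite /region2_floor ler_pdivrMr; last by lra.
have -> : (ls + lr) * (1 + ghi / glo) = ls + ghi / glo * lr + (lr + ghi / glo * ls).
  by ring.
lra.
Qed.

Lemma psg_run_norm_le (N K : nat) (w : 'I_K -> R) (a : 'I_N -> R)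
    (b c : 'I_N -> 'I_K -> R) (Ps Pr Pt glo ghi dl : R) (Rg : triple R -> Prop)
    (lam th : nat -> triple R) :
  0 < glo -> glo <= ghi -> 0 < dl -> (forall k, 0 <= w k <= 1) ->
  (forall m, gain_ok glo ghi (a m)) -> (forall n k, gain_ok glo ghi (b n k)) ->
  (forall m k, gain_ok glo ghi (c m k)) ->
  (0 < N)%N -> 0 < Ps -> 0 < Pr -> 0 < Pt ->
  (forall x, Rg x -> tnonneg x /\
     forall m k, price_floor dl (c m k) (ts x + tt x) (tr x + tt x)) ->
  psg_run Rg (subgrad w a b c Ps Pr Pt) lam th ->
  forall l, norm3 (th l) <= (Ps + Pr + Pt + 4 * K%:R * power_bound glo ghi dl) * N%:R ^+ 2.
Proof.
move=> glo0 gloghi dl0 w01 aok bok cok N0 Ps0 Pr0 Pt0 Rg_floor run l.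
have [/Rg_floor[lam_nneg floor] sg] := psg_run_iterates run l.
exact: subgrad_norm_le sg.
Qed.

Definition dual_price_floor (wmin P glo ghi : R) : R :=
  Num.min (region1_floor wmin P glo ghi) (region2_floor wmin P glo ghi).

Lemma dual_price_floor_gt0 (wmin P glo ghi : R) :
  0 < wmin -> 0 < P -> 0 < glo -> glo <= ghi -> 0 < dual_price_floor wmin P glo ghi.
Proof.
move=> wmin0 P0 glo0 gloghi; have ha : 0 < alpha R := alpha_gt0.
have ghi0 : 0 < ghi := lt_le_trans glo0 gloghi.
have ghiP0 : 0 <= ghi * P := mulr_ge0 (ltW ghi0) (ltW P0).
have gg0 : 0 <= ghi / glo := divr_ge0 (ltW ghi0) (ltW glo0).
have c4a : 0 < 4 * alpha R by rewrite mulr_gt0.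
have inv0 : 0 < glo^-1 by rewrite invr_gt0.
rewrite lt_min; apply/andP; split; apply: divr_gt0.
- exact: mulr_gt0.
- by apply: mulr_gt0 => //; lra.
- by apply: divr_gt0 => //; apply: mulr_gt0 => //; lra.
- lra.
Qed.

End Bounds.

Theorem lemma4 (R : realType) (K : nat) (w : 'I_K -> R) (Ps Pr Pt glo ghi : R) :
  (forall k, 0 <= w k) -> \sum_k w k = 1 ->
  0 < Ps -> 0 < Pr -> 0 < Pt -> 0 < glo -> glo <= ghi ->
  exists thmax : R,
  forall (N : nat) (a : 'I_N -> R) (b c : 'I_N -> 'I_K -> R),
    (forall m, gain_ok glo ghi (a m)) ->
    (forall n k, gain_ok glo ghi (b n k)) ->
    (forall m k, gain_ok glo ghi (c m k)) ->
    (exists m, 0 < a m) -> (exists n k, 0 < b n k) ->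
    ((exists m k, 0 < c m k) ->
       forall lam th : nat -> triple R,
         psg_run (region1 w a c Ps Pt) (subgrad w a b c Ps Pr Pt) lam th ->
         forall l, norm3 (th l) <= thmax * (N%:R) ^+ 2) /\
    (forall lam th : nat -> triple R,
       psg_run (region2 w a b Ps Pt) (subgrad w a b (fun _ _ => 0) Ps Pr Pt) lam th ->
       forall l, norm3 (th l) <= thmax * (N%:R) ^+ 2).
Proof.
move=> w0 w1 Ps0 Pr0 Pt0 glo0 gloghi.
have w01 := weights_le1 w0 w1; have wmin0 := minpos_weights_gt0 w0 w1.
have P0 : 0 < Num.min Ps Pt by rewrite lt_min Ps0 Pt0.
set dl := dual_price_floor (minpos w) (Num.min Ps Pt) glo ghi.
have dl0 : 0 < dl by apply: dual_price_floor_gt0.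
exists (Ps + Pr + Pt + 4 * K%:R * power_bound glo ghi dl).
move=> N a b c aok bok cok [m0 am0] [n0 [k0 bnk0]].
have N0 : (0 < N)%N := leq_ltn_trans (leq0n m0) (ltn_ord m0).
have [/andP[glo_a a_ghi] /andP[_ maxa_ghi]] :=
  gains_minpos_maxof glo0 gloghi aok (ex_intro _ m0 am0).
have [_ /andP[b_max _]] := gains_minpos_maxof glo0 gloghi
  (fun nk : 'I_N * 'I_K => bok nk.1 nk.2) (ex_intro _ (n0, k0) bnk0).
split=> [[m1 [k1 cmk0]]|] lam th run.
  have [/andP[c_min _] _] := gains_minpos_maxof glo0 gloghi
    (fun mk : 'I_N * 'I_K => cok mk.1 mk.2) (ex_intro _ (m1, k1) cmk0).
  apply: psg_run_norm_le run => // x R1x; split; first by case: R1x.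
  move=> m k; left; rewrite ge_min.
  by rewrite (region1_price_floor glo0 Ps0 Pt0 wmin0 glo_a c_min maxa_ghi R1x).
apply: psg_run_norm_le run => // [m k|x R2x]; first by left.
split=> [|m k]; first by case: R2x.
right; split=> //; rewrite ge_min.
by rewrite (region2_price_floor glo0 Ps0 Pt0 wmin0 glo_a a_ghi b_max R2x) orbT.
Qed.
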